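(* Let $f:\mathbb{R}^p\to\mathbb{R}$ be differentiable and suppose there exist $\gamma,\kappa>0$ such that for all $x,y\in\mathbb{R}^p$: $$f(x)\le f(y)\implies\langle\nabla f(y),x-y\rangle\le-\frac\gamma2\|x-y\|^2,$$ $$f(x)\le f(y)\implies\langle\nabla f(y),x-y\rangle\le\kappa(f(x)-f(y)).$$ Then for all $x,y\in\mathbb{R}^p$, $$f(x)\le f(y)\implies f(x)\ge f(y)+\frac2\kappa\langle\nabla f(y),x-y\rangle+\frac{\gamma}{2\kappa}\|x-y\|^2.$$ *)

(* R^p is the row-vector space 'rV[R]_p over R : realType. *)
From HB Require Import structures.
From mathcomp Require Import all_boot all_order all_algebra.
From mathcomp Require Import all_classical all_reals all_analysis.
Set Implicit Arguments. Unset Strict Implicit. Unset Printing Implicit Defensive.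
Import Order.TTheory GRing.Theory Num.Theory.
Import numFieldNormedType.Exports.
Local Open Scope ring_scope.

Definition dotp (R : realType) (p : nat) (u v : 'rV[R]_p) : R :=
  \sum_(i < p) u ord0 i * v ord0 i.

Definition enorm (R : realType) (p : nat) (v : 'rV[R]_p) : R :=
  Num.sqrt (dotp v v).

Definition gradient (R : realType) (p : nat) (f : 'rV[R]_p -> R)
  (y : 'rV[R]_p) : 'rV[R]_p :=
  \row_(i < p) ('D_(delta_mx 0 i) f y).

From HB Require Import structures.
From mathcomp Require Import all_boot all_order all_algebra.
From mathcomp Require Import all_classical all_reals all_analysis.
From mathcomp Require Import ring lra.
Import Order.TTheory GRing.Theory Num.Theory.
Import numFieldNormedType.Exports.
Local Open Scope ring_scope.

(* Write d = <grad f(y), x - y> and n = |x - y|^2.  The first hypothesis says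
   d + (gamma/2) n <= 0, hence 2 d + (gamma/2) n <= d <= kappa (f x - f y) by
   the second; dividing by kappa gives the claim.  Only these two pointwise
   inequalities at the pair (x, y) are used: neither differentiability nor the
   sign of gamma plays any role. *)

Lemma combine_descent_bounds (R : realFieldType) (gamma kappa d n a b : R) :
  0 < kappa -> d <= - (gamma / 2) * n -> d <= kappa * (a - b) ->
  b + (2 / kappa) * d + (gamma / (2 * kappa)) * n <= a.
Proof.
move=> kappa_gt0 d_le_quad d_le_gap.
have kappa_neq0 : kappa != 0 by rewrite gt_eqF.
have sum_le_gap : 2 * d + gamma / 2 * n <= kappa * (a - b) by lra.
have -> : b + 2 / kappa * d + gamma / (2 * kappa) * n
          = b + (2 * d + gamma / 2 * n) / kappa by field.
by rewrite -lerBrDl ler_pdivrMr // (mulrC (a - b)).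
Qed.

Theorem proposition5p1 (R : realType) (p : nat) (f : 'rV[R]_p -> R)
  (gamma kappa : R)
  (hdiff : forall x : 'rV[R]_p, differentiable f x)
  (hgamma : 0 < gamma) (hkappa : 0 < kappa)
  (h1 : forall x y : 'rV[R]_p, f x <= f y ->
     dotp (gradient f y) (x - y) <= - (gamma / 2) * enorm (x - y) ^+ 2)
  (h2 : forall x y : 'rV[R]_p, f x <= f y ->
     dotp (gradient f y) (x - y) <= kappa * (f x - f y)) :
  forall x y : 'rV[R]_p, f x <= f y ->
    f y + (2 / kappa) * dotp (gradient f y) (x - y)
        + (gamma / (2 * kappa)) * enorm (x - y) ^+ 2 <= f x.
Proof.
move=> x y fx_le_fy.
exact: combine_descent_bounds hkappa (h1 x y fx_le_fy) (h2 x y fx_le_fy).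
Qed.
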